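(* Let $l\geq 1$ and let $c_1,\dots,c_l$ and $d_1,\dots,d_l$ be positive integers. Let $u$ be a vertex of a graph $G$ such that $G$ contains a path $P_{\max\{c_1,\dots,c_l\}+1}$ as a proper subgraph, with $u$ as one of its end vertices. Let $P_{d_1+1},\dots,P_{d_l+1}$ be paths that are mutually vertex-disjoint and vertex-disjoint from $G$, and let $v_i$ be an end vertex of $P_{d_i+1}$ for $i=1,\dots,l$. Then for every $k\geq 0$, $$M_k\big(G(u=v_1)P_{d_1+1}\cdots(u=v_l)P_{d_l+1}\big)\geq M_k(G)+\sum_{i=1}^l\left(M_k(P_{c_i+d_i+1})-M_k(P_{c_i+1})\right).$$
   Context: $P_m$ denotes the path on $m$ vertices. $M_k(H)$ is the number of closed walks of length $k$ in a graph $H$. The coalescence $G(u=v)H$ of vertex-disjoint graphs $G$ and $H$ with respect to a vertex $u$ of $G$ and a vertex $v$ of $H$ is obtained from the disjoint union by identifying $u$ and $v$; $G(u=v_1)P_{d_1+1}\cdots(u=v_l)P_{d_l+1}$ denotes the graph obtained from the disjoint union of $G,P_{d_1+1},\dots,P_{d_l+1}$ by identifying $u,v_1,\dots,v_l$ into a single vertex (i.e. attaching all the paths at $u$ by an end vertex). *)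

From mathcomp Require Import all_boot all_order all_algebra.
Set Implicit Arguments. Unset Strict Implicit. Unset Printing Implicit Defensive.

Definition simple_graph (T : finType) (e : rel T) : Prop :=
  symmetric e /\ irreflexive e.

(* M_k(H): number of closed walks of length k, i.e. sequences
   w_0, ..., w_k of vertices with w_0 = w_k and w_i ~ w_{i+1}. *)
Definition closed_walks (T : finType) (e : rel T) (k : nat) : nat :=
  #|[set w : {ffun 'I_k.+1 -> T} |
      (w ord0 == w ord_max) &&
      [forall i : 'I_k, e (w (widen_ord (leqnSn k) i)) (w (lift ord0 i))]]|.

Definition path_rel (m : nat) : rel 'I_m :=
  fun i j => (i.+1 == j :> nat) || (j.+1 == i :> nat).
Arguments path_rel m : clear implicits.

(* Non-root vertices of the attached paths: (i, j) with j : 'I_(d i) stands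
   for the vertex of P_{d_i+1} at distance j+1 from the end vertex v_i (= u). *)
Definition pend_vertex (l : nat) (d : 'I_l -> nat) : finType :=
  {i : 'I_l & 'I_(d i)}.

Definition attach_paths_rel (V : finType) (e : rel V) (u : V)
    (l : nat) (d : 'I_l -> nat) : rel (V + pend_vertex d)%type :=
  fun x y =>
    match x, y with
    | inl a, inl b => e a b
    | inl a, inr q => (a == u) && (val (tagged q) == 0)
    | inr q, inl b => (b == u) && (val (tagged q) == 0)
    | inr p, inr q => (tag p == tag q) &&
        (((val (tagged p)).+1 == val (tagged q)) ||
         ((val (tagged q)).+1 == val (tagged p)))
    end.

Definition has_proper_path_at (V : finType) (e : rel V) (u : V) (m : nat) : Prop :=
  exists f : 'I_m.+1 -> V,
    [/\ injective f, f ord0 = u,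
        (forall i : 'I_m, e (f (widen_ord (leqnSn m) i)) (f (lift ord0 i))) &
        ~ ((forall x : V, exists i, f i = x) /\
           (forall x y : V, e x y -> exists i : 'I_m,
              (x = f (widen_ord (leqnSn m) i) /\ y = f (lift ord0 i)) \/
              (y = f (widen_ord (leqnSn m) i) /\ x = f (lift ord0 i))))].

From mathcomp Require Import all_boot all_order all_algebra.
From mathcomp Require Import zify.
Import Order.TTheory GRing.Theory Num.Theory.
Set Implicit Arguments. Unset Strict Implicit. Unset Printing Implicit Defensive.

(* Let [f] be the path of length [m = max c_i] in [G] starting at [u].  For each
   [i], gluing [f 0..c_i] to the [i]-th attached path embeds [P_{c_i+d_i+1}] into
   the attached graph [H], with [u] at position [c_i].  Closed walks of [H] are
   sorted by the branch of an attached vertex they visit: those visiting none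
   contain the closed walks of [G], and those labelled by branch [i] contain
   the images of the closed walks of [P_{c_i+d_i+1}] that go beyond position
   [c_i].  The closed walks of [P_{c_i+d_i+1}] that stay in [0..c_i] are just
   the closed walks of [P_{c_i+1}], which gives the remaining terms. *)

Section ClosedWalks.
Variables (T : finType) (e : rel T) (k : nat).

Definition closed_walk (w : {ffun 'I_k.+1 -> T}) : bool :=
  (w ord0 == w ord_max) &&
  [forall i : 'I_k, e (w (widen_ord (leqnSn k) i)) (w (lift ord0 i))].

Lemma closed_walksE : closed_walks e k = #|[set w | closed_walk w]|.
Proof. by []. Qed.

End ClosedWalks.

Section MapWalk.
Variables (T1 T2 : finType) (g : T1 -> T2) (k : nat).

Definition map_walk (w : {ffun 'I_k.+1 -> T1}) : {ffun 'I_k.+1 -> T2} :=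
  [ffun t => g (w t)].

Lemma map_walkE w t : map_walk w t = g (w t).
Proof. exact: ffunE. Qed.

Lemma closed_walk_map (e1 : rel T1) (e2 : rel T2) w :
  {homo g : a b / e1 a b >-> e2 a b} -> closed_walk e1 w -> closed_walk e2 (map_walk w).
Proof.
move=> g_homo /andP[/eqP w_closed /forallP w_edge]; apply/andP; split.
  by rewrite !map_walkE w_closed.
by apply/forallP => i; rewrite !map_walkE; apply: g_homo.
Qed.

Lemma map_walk_inj : injective g -> injective map_walk.
Proof.
by move=> g_inj w w' /ffunP eq_ww'; apply/ffunP => t; apply: g_inj; rewrite -!map_walkE.
Qed.

End MapWalk.

Definition escaping_walks (c d k : nat) : {set {ffun 'I_k.+1 -> 'I_(c + d).+1}} :=
  [set w | closed_walk (path_rel (c + d).+1) w & [exists t, c < w t]].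

Lemma closed_walks_path_le (c d k : nat) :
  closed_walks (path_rel (c + d).+1) k
  <= #|escaping_walks c d k| + closed_walks (path_rel c.+1) k.
Proof.
have le_cd : c.+1 <= (c + d).+1 by rewrite ltnS leq_addr.
have widen_inj : injective (widen_ord le_cd) by move=> a b /(congr1 val) /= /val_inj.
rewrite !closed_walksE -(card_imset _ (map_walk_inj (k:=k) widen_inj)).
apply: leq_trans (leq_card_setU _ _); apply: subset_leq_card; apply/subsetP => w.
rewrite !inE => w_closed; rewrite w_closed /=.
case: (boolP [exists t, c < w t]) => //= /existsPn w_low; apply/imsetP.
have w_le t : w t <= c by rewrite leqNgt w_low.
exists (map_walk (fun v : 'I_(c + d).+1 => inord v : 'I_c.+1) w).
  move: w_closed => /andP[/eqP w0 /forallP w_edge]; rewrite inE; apply/andP; split.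
    by rewrite !map_walkE w0.
  by apply/forallP => i; rewrite !map_walkE /path_rel !inordK ?ltnS ?w_le //; exact: w_edge.
by apply/ffunP => t; rewrite !map_walkE; apply: val_inj; rewrite /= inordK ?ltnS.
Qed.

Lemma big_option (R : Type) (idx : R) (op : Monoid.com_law idx) (T : finType)
    (F : option T -> R) :
  \big[op/idx]_(o : option T) F o = op (F None) (\big[op/idx]_(x : T) F (Some x)).
Proof.
rewrite (bigD1 None) //=; congr (op _ _).
by rewrite (reindex_omap Some id) => [|[]//]; apply: eq_bigl => x; rewrite eqxx.
Qed.

Section AttachedPaths.
Variables (V : finType) (e : rel V) (u : V) (l : nat) (d : 'I_l -> nat).
Hypothesis e_sym : symmetric e.

Local Notation H := (@attach_paths_rel V e u l d).

Lemma attach_paths_sym : symmetric H.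
Proof. by move=> [a|p] [b|q] //=; rewrite eq_sym orbC. Qed.

Definition pend_branch k (w : {ffun 'I_k.+1 -> V + pend_vertex d}) : option 'I_l :=
  omap tag [pick p | inr p \in codom w].

Definition branch_walks k (o : option 'I_l) : {set {ffun 'I_k.+1 -> V + pend_vertex d}} :=
  [set w | closed_walk H w & pend_branch w == o].

Lemma closed_walks_by_branch k :
  closed_walks H k = #|branch_walks k None| + \sum_i #|branch_walks k (Some i)|.
Proof.
rewrite closed_walksE -(big_option _ (fun o => #|branch_walks k o|)) -sum1_card.
rewrite (partition_big (@pend_branch k) xpredT) //.
by apply: eq_bigr => o _; rewrite -sum1_card; apply: eq_bigl => w; rewrite !inE.
Qed.

Lemma closed_walks_le_unbranched k : closed_walks e k <= #|branch_walks k None|.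
Proof.
rewrite closed_walksE -(card_imset _ (map_walk_inj (k:=k) (@inl_inj V (pend_vertex d)))).
apply: subset_leq_card; apply/subsetP => _ /imsetP[w + ->]; rewrite !inE => w_closed.
rewrite (closed_walk_map _ w_closed) //=.
by rewrite /pend_branch; case: pickP => // p /codomP[t]; rewrite map_walkE.
Qed.

Section Graft.
Variables (i : 'I_l) (c : nat) (g : 'I_c.+1 -> V).
Hypotheses (g0 : g ord0 = u) (g_inj : injective g)
  (g_path : forall j : 'I_c, e (g (widen_ord (leqnSn c) j)) (g (lift ord0 j))).

(* Position [v] of [P_{c+d_i+1}] goes to [g (c - v)] for [v <= c], and to the
   attached vertex at distance [v - c] from [u] on branch [i] otherwise. *)
Definition graft (v : 'I_(c + d i).+1) : V + pend_vertex d :=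
  match @split c.+1 (d i) v with
  | inl a => inl (g (rev_ord a))
  | inr b => inr (Tagged (fun j => 'I_(d j)) b)
  end.

Lemma graft_succ_edge (a b : 'I_(c + d i).+1) : a.+1 = b -> H (graft a) (graft b).
Proof.
rewrite /graft => ab; case: splitP => [a' aa'|a' aa']; case: splitP => [b' bb'|b' bb'] /=;
  move: ab (ltn_ord a') (ltn_ord b'); rewrite aa' bb' => ab lt_a' lt_b'.
- have jc : c - b' < c by lia.
  have := g_path (Ordinal jc); rewrite e_sym; congr (e (g _) (g _)); apply: val_inj.
    by rewrite /= /bump /=; lia.
  by rewrite /=; lia.
- have -> : rev_ord a' = ord0 by apply: val_inj => /=; lia.
  by rewrite g0 eqxx /=; lia.
- lia.
- by rewrite eqxx /=; apply/orP; left; apply/eqP; lia.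
Qed.

Lemma graft_edge : {homo graft : a b / path_rel (c + d i).+1 a b >-> H a b}.
Proof.
move=> a b /orP[]/eqP ab; first exact: graft_succ_edge.
by rewrite attach_paths_sym; apply: graft_succ_edge.
Qed.

Lemma graft_inj : injective graft.
Proof.
move=> a b; rewrite /graft.
case: splitP => [a' aa'|a' aa']; case: splitP => [b' bb'|b' bb'] //=.
  by move=> [/g_inj /rev_ord_inj a'b']; apply: val_inj; rewrite /= aa' bb' a'b'.
move=> [] /(eq_from_Tagged (T_ := fun j => 'I_(d j))) a'b'.
by apply: val_inj; rewrite /= aa' bb' a'b'.
Qed.

Lemma graft_tag (v : 'I_(c + d i).+1) p : graft v = inr p -> tag p = i.
Proof. by rewrite /graft; case: splitP => // b _ [<-]. Qed.

Lemma graft_beyond (v : 'I_(c + d i).+1) : c < v -> exists p, graft v = inr p.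
Proof.
rewrite /graft; case: splitP => [a -> | b _]; last by exists (Tagged (fun j => 'I_(d j)) b).
by rewrite ltnNge -ltnS ltn_ord.
Qed.

Lemma escaping_walks_le_branch k :
  #|escaping_walks c (d i) k| <= #|branch_walks k (Some i)|.
Proof.
rewrite -(card_imset _ (map_walk_inj (k:=k) graft_inj)).
apply: subset_leq_card; apply/subsetP => _ /imsetP[w + ->].
rewrite !inE => /andP[w_closed /existsP[t beyond_t]].
rewrite (closed_walk_map graft_edge w_closed) /=.
rewrite /pend_branch; case: pickP => [p /codomP[s] | no_pend].
  by rewrite map_walkE => /esym/graft_tag /= ->.
have [p graft_t] := graft_beyond beyond_t.
by move: (no_pend p); rewrite -graft_t -(map_walkE graft) codom_f.
Qed.

End Graft.
End AttachedPaths.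

Local Open Scope ring_scope.

Theorem corollary1 (l : nat) (c d : 'I_l -> nat) (V : finType) (e : rel V) (u : V) :
  (1 <= l)%N ->
  (forall i, (0 < c i)%N) -> (forall i, (0 < d i)%N) ->
  simple_graph e ->
  has_proper_path_at e u (\max_(i < l) c i)%N ->
  forall k : nat,
    (closed_walks e k)%:Z +
      \sum_(i < l) ((closed_walks (path_rel (c i + d i).+1) k)%:Z
                    - (closed_walks (path_rel (c i).+1) k)%:Z)
    <= (closed_walks (@attach_paths_rel V e u l d) k)%:Z.
Proof.
move=> _ _ _ [e_sym _] [f [f_inj f0 f_path _]] k.
have c_le i : ((c i).+1 <= (\max_(j < l) c j).+1)%N by rewrite ltnS leq_bigmax.
pose g i (a : 'I_(c i).+1) := f (widen_ord (c_le i) a).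
have g0 i : g i ord0 = u by rewrite -f0; congr f; apply: val_inj.
have g_inj i : injective (g i) by move=> a b /f_inj /(congr1 val) /= /val_inj.
have g_path i (j : 'I_(c i)) : e (g i (widen_ord (leqnSn _) j)) (g i (lift ord0 j)).
  have jm : (j < \max_(j < l) c j)%N by rewrite (leq_trans (ltn_ord j)) // -ltnS c_le.
  by have := f_path (Ordinal jm); congr (e (f _) (f _)); apply: val_inj.
rewrite (closed_walks_by_branch e u d) PoszD.
apply: lerD; first by rewrite lez_nat closed_walks_le_unbranched.
rewrite -natz natr_sum; apply: ler_sum => i _.
rewrite natz lerBlDr -PoszD lez_nat (leq_trans (closed_walks_path_le _ _ _)) //.
by rewrite leq_add2r (escaping_walks_le_branch d e_sym i (g0 i) (g_inj i) (g_path i)).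
Qed.
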